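(* Let \(X\) be a nonempty set and let \(\Phi\) be a mapping with domain \(X^{2}\) such that \(|\Phi(X^{2})| \leqslant \aleph_{0}\). Then the following conditions are equivalent. (i) \(\Phi\) is combinatorially similar to a pseudoultrametric \(d \colon X^{2} \to [0,\infty)\) with \(d(X^{2}) \subseteq \mathbb{Q}^{+}\), where \(\mathbb{Q}^{+} = \mathbb{Q} \cap [0,\infty)\). (ii) \(\Phi\) is combinatorially similar to a pseudoultrametric. (iii) \(\Phi\) is symmetric, the transitive closure \(u_{\Phi}^{t}\) of the binary relation \(u_{\Phi}\) is antisymmetric, \(\Phi\) is \(a_0\)-coherent for some point \(a_0 \in \Phi(X^{2})\), and for every triple \(\langle x_1, x_2, x_3\rangle\) of points of \(X\) there is a permutation \((i_1,i_2,i_3)\) of \((1,2,3)\) such that \(\Phi(x_{i_1}, x_{i_2}) = \Phi(x_{i_2}, x_{i_3})\).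
   Context: For a mapping \(F\) with domain \(A\), \(F(A)\) denotes its range. A pseudoultrametric on a set \(Z\) is a symmetric function \(d\colon Z^2\to[0,\infty)\) with \(d(z,z)=0\) and \(d(x,y)\le \max\{d(x,z),d(z,y)\}\) for all \(x,y,z\in Z\). For nonempty sets \(X,Y\) and mappings \(\Phi\) with domain \(X^2\), \(\Psi\) with domain \(Y^2\), \(\Phi\) is combinatorially similar to \(\Psi\) if there are bijections \(f\colon \Phi(X^2)\to\Psi(Y^2)\) and \(g\colon Y\to X\) with \(\Psi(x,y)=f(\Phi(g(x),g(y)))\) for all \(x,y\in Y\). A mapping \(\Phi\) with domain \(X^2\) is strongly consistent with an equivalence relation \(R\) on \(X\) if \(\langle x_1,x_2\rangle\in R\) and \(\langle x_3,x_4\rangle\in R\) imply \(\Phi(x_1,x_3)=\Phi(x_2,x_4)\); for \(a_0\in\Phi(X^2)\), \(\Phi\) is \(a_0\)-coherent if the fiber \(\Phi^{-1}(a_0)=\{\langle x,y\rangle: \Phi(x,y)=a_0\}\) is an equivalence relation on \(X\) and \(\Phi\) is strongly consistent with it. For \(\Phi\) with domain \(X^2\) and \(Y=\Phi(X^2)\), \(u_\Phi\subseteq Y^2\) is the relation: \(\langle y_1,y_2\rangle\in u_\Phi\) iff there are \(x_1,x_2,x_3\in X\) with \(y_1=\Phi(x_1,x_3)\) and \(y_2=\Phi(x_1,x_2)=\Phi(x_2,x_3)\). The transitive closure of a relation \(\gamma\) is \(\gamma^t=\bigcup_{n\ge1}\gamma^n\), where \(\gamma^1=\gamma\), \(\gamma^{n+1}=\gamma^n\circ\gamma\)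 and \(\langle x,y\rangle\in\alpha\circ\beta\) iff there is \(z\) with \(\langle x,z\rangle\in\alpha\), \(\langle z,y\rangle\in\beta\). *)

From Stdlib Require Import Reals QArith Qreals Relations.
Open Scope R_scope.

Definition rng {X Y : Type} (Phi : X -> X -> Y) : Type :=
  {y : Y | exists x1 x2, Phi x1 x2 = y}.

Definition in_rng {X Y : Type} (Phi : X -> X -> Y) (a b : X) : rng Phi :=
  exist _ (Phi a b) (ex_intro _ a (ex_intro _ b eq_refl)).

Definition injective {A B : Type} (f : A -> B) : Prop :=
  forall a a', f a = f a' -> a = a'.
Definition surjective {A B : Type} (f : A -> B) : Prop :=
  forall b, exists a, f a = b.
Definition bijective {A B : Type} (f : A -> B) : Prop :=
  injective f /\ surjective f.

Definition countable_range {X Y : Type} (Phi : X -> X -> Y) : Prop :=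
  exists h : rng Phi -> nat, injective h.

Definition comb_similar {X Y Z W : Type} (Phi : X -> X -> Y) (Psi : Z -> Z -> W)
  : Prop :=
  exists (f : rng Phi -> rng Psi) (g : Z -> X),
    bijective f /\ bijective g /\
    forall x y : Z, Psi x y = proj1_sig (f (in_rng Phi (g x) (g y))).

Definition pseudoultrametric {Z : Type} (d : Z -> Z -> R) : Prop :=
  (forall x y, 0 <= d x y) /\
  (forall x y, d x y = d y x) /\
  (forall z, d z z = 0) /\
  (forall x y z, d x y <= Rmax (d x z) (d z y)).

Definition symmetric_map {X Y : Type} (Phi : X -> X -> Y) : Prop :=
  forall x y, Phi x y = Phi y x.

Definition u_rel {X Y : Type} (Phi : X -> X -> Y) : relation Y :=
  fun y1 y2 => exists x1 x2 x3,
    y1 = Phi x1 x3 /\ y2 = Phi x1 x2 /\ y2 = Phi x2 x3.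

Definition antisymmetric_rel {Y : Type} (r : relation Y) : Prop :=
  forall a b, r a b -> r b a -> a = b.

Definition strongly_consistent {X Y : Type} (Phi : X -> X -> Y) (Rl : relation X)
  : Prop :=
  forall x1 x2 x3 x4, Rl x1 x2 -> Rl x3 x4 -> Phi x1 x3 = Phi x2 x4.

Definition coherent {X Y : Type} (Phi : X -> X -> Y) (a0 : Y) : Prop :=
  equivalence X (fun x y => Phi x y = a0) /\
  strongly_consistent Phi (fun x y => Phi x y = a0).

(* for every triple there is a permutation (i1,i2,i3) of (1,2,3) with
   Phi(x_i1,x_i2) = Phi(x_i2,x_i3); the six permutations written out *)
Definition triple_condition {X Y : Type} (Phi : X -> X -> Y) : Prop :=
  forall x1 x2 x3 : X,
    Phi x1 x2 = Phi x2 x3 \/ Phi x1 x3 = Phi x3 x2 \/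
    Phi x2 x1 = Phi x1 x3 \/ Phi x2 x3 = Phi x3 x1 \/
    Phi x3 x1 = Phi x1 x2 \/ Phi x3 x2 = Phi x2 x1.

(* A pseudoultrametric is determined, up to combinatorial similarity, by the
   order of its values, and the strong triangle inequality is a statement
   about that order: in every triangle the two largest sides are equal.  This
   gives (ii) => (iii) directly.  Conversely, under (iii) the reflexive
   transitive closure of u_Phi is a partial order on Phi(X^2) whose least
   element is the diagonal value a0, and in which Phi(x,y) is below Phi(x,z)
   or below Phi(z,y) for every triangle.  A countable partial order embeds
   strictly monotonically into Q (enumerate it and put each new element in the
   gap between the images of its earlier predecessors and successors, avoiding
   the finitely many values already used); composing Phi with such an
   embedding, shifted so that a0 goes to 0, yields the rational
   pseudoultrametric of (i). *)

From Stdlib Require Import Reals QArith Qreals Relations.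
From Stdlib Require Import Qminmax Lqa Lra Lia List Classical ClassicalEpsilon.
Open Scope R_scope.

Section RationalGaps.
Local Open Scope Q_scope.

Lemma Qlist_lower_bound (l : list Q) : exists m, forall b, In b l -> m < b.
Proof.
  induction l as [|c l [m Hm]]; [exists 0; intros b []|].
  exists (Qmin m c - 1). intros b [<-|Hb].
  - pose proof (Q.le_min_r m c). Lqa.lra.
  - pose proof (Q.le_min_l m c). specialize (Hm b Hb). Lqa.lra.
Qed.

Lemma Qlist_sup_below (lo hi : list Q) :
  (forall a b, In a lo -> In b hi -> a < b) ->
  exists L, (forall a, In a lo -> a <= L) /\ (forall b, In b hi -> L < b).
Proof.
  induction lo as [|c lo IH]; intros Hsep.
  - destruct (Qlist_lower_bound hi) as [m Hm]. exists m. split; [intros a []|exact Hm].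
  - destruct IH as [L [HL1 HL2]]; [intros a b Ha Hb; apply Hsep; simpl; auto|].
    exists (Qmax L c). split.
    + intros a [<-|Ha]; [apply Q.le_max_r|].
      apply Qle_trans with L; [auto|apply Q.le_max_l].
    + intros b Hb. apply Q.max_lub_lt; auto. apply Hsep; simpl; auto.
Qed.

Lemma Qlist_inf_above (L : Q) (hi : list Q) :
  (forall b, In b hi -> L < b) ->
  exists U, L < U /\ forall b, In b hi -> U <= b.
Proof.
  induction hi as [|c hi IH]; intros Hhi; [exists (L + 1); split; [Lqa.lra|intros b []]|].
  destruct IH as [U [HLU HU]]; [intros b Hb; apply Hhi; simpl; auto|].
  exists (Qmin U c). split.
  - apply Q.min_glb_lt; auto. apply Hhi; simpl; auto.
  - intros b [<-|Hb]; [apply Q.le_min_r|].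
    apply Qle_trans with U; [apply Q.le_min_l|auto].
Qed.

Lemma Qinterval_avoid (F : list Q) (L U : Q) :
  L < U -> exists q, L < q /\ q < U /\ forall f, In f F -> ~ q == f.
Proof.
  revert L U. induction F as [|f F IH]; intros L U HLU.
  - exists ((L + U) * (1#2)). repeat split; try Lqa.lra. intros f [].
  - destruct (Qlt_le_dec L f) as [Hf|Hf]; [destruct (Qlt_le_dec f U) as [Hf'|Hf']|];
      [destruct (IH L f Hf) as [q [H1 [H2 H3]]]|destruct (IH L U HLU) as [q [H1 [H2 H3]]]..];
      exists q; (repeat split; [Lqa.lra|Lqa.lra|]); intros g [<-|Hg]; auto; Lqa.lra.
Qed.

Lemma Qgap_avoid (lo hi F : list Q) :
  (forall a b, In a lo -> In b hi -> a < b) ->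
  exists q, (forall a, In a lo -> a < q) /\ (forall b, In b hi -> q < b) /\
            (forall f, In f F -> ~ q == f).
Proof.
  intros Hsep.
  destruct (Qlist_sup_below lo hi Hsep) as [L [Hlo Hhi]].
  destruct (Qlist_inf_above L hi Hhi) as [U [HLU HU]].
  destruct (Qinterval_avoid F L U HLU) as [q [HLq [HqU HF]]].
  exists q. repeat split; auto.
  - intros a Ha. specialize (Hlo a Ha). Lqa.lra.
  - intros b Hb. specialize (HU b Hb). Lqa.lra.
Qed.

End RationalGaps.

Section CountableOrderInQ.

Variables (T : Type) (enc : T -> nat) (le : T -> T -> Prop).
Hypothesis enc_inj : injective enc.
Hypothesis le_trans : forall a b c, le a b -> le b c -> le a c.
Hypothesis le_antisym : forall a b, le a b -> le b a -> a = b.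

Lemma enc_prefix_enum (P : T -> Prop) (n : nat) :
  exists l : list T, forall a, In a l <-> (enc a < n)%nat /\ P a.
Proof.
  induction n as [|n [l IH]]; [exists nil; intros a; simpl; lia|].
  destruct (classic (exists t, enc t = n /\ P t)) as [[t [Ht Pt]]|Hn].
  - exists (t :: l). intros a. simpl. rewrite IH. split.
    + intros [<-|[Ha Pa]]; split; auto; lia.
    + intros [Ha Pa]. destruct (Nat.eq_dec (enc a) n) as [E|E]; [|right; split; auto; lia].
      left. apply enc_inj. congruence.
  - exists l. intros a. rewrite IH. split; intros [Ha Pa]; (split; [|exact Pa]); [lia|].
    destruct (Nat.eq_dec (enc a) n) as [E|E]; [exfalso; eauto|lia].
Qed.

Definition embeds_below (n : nat) (h : T -> Q) : Prop :=
  forall a b, (enc a < n)%nat -> (enc b < n)%nat ->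
    (le a b -> (h a <= h b)%Q) /\ ((h a == h b)%Q -> a = b).

Lemma embeds_below_succ (n : nat) (h : T -> Q) : embeds_below n h ->
  exists h', embeds_below (S n) h' /\ forall a, (enc a < n)%nat -> h' a = h a.
Proof.
  intros Hh.
  destruct (classic (exists t, enc t = n)) as [[t Ht]|Hn].
  2:{ assert (Hlt : forall a, (enc a < S n)%nat -> (enc a < n)%nat).
      { intros a Ha. destruct (Nat.eq_dec (enc a) n); [exfalso; eauto|lia]. }
      exists h. split; [|auto]. intros a b Ha Hb. apply Hh; auto. }
  destruct (enc_prefix_enum (fun a => le a t) n) as [lo Hlo].
  destruct (enc_prefix_enum (fun b => le t b) n) as [hi Hhi].
  destruct (enc_prefix_enum (fun _ => True) n) as [all Hall].
  assert (Hsep : forall a b, In a lo -> In b hi -> (h a < h b)%Q).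
  { intros a b Ha Hb. apply Hlo in Ha as [Ha Hat]. apply Hhi in Hb as [Hb Htb].
    destruct (Hh a b Ha Hb) as [Hmono Hinj].
    destruct (Qle_lteq (h a) (h b)) as [[Hlt|Heq] _]; [eauto|exact Hlt|].
    apply Hinj in Heq. subst b. replace a with t in Ha by auto. lia. }
  destruct (Qgap_avoid (map h lo) (map h hi) (map h all)) as [q [Hqlo [Hqhi Hqall]]].
  { intros ? ? [a [<- Ha]]%in_map_iff [b [<- Hb]]%in_map_iff. auto. }
  exists (fun x => if Nat.eq_dec (enc x) n then q else h x). split.
  - intros a b Ha Hb.
    destruct (Nat.eq_dec (enc a) n) as [Ea|Ea], (Nat.eq_dec (enc b) n) as [Eb|Eb].
    + split; [intros; apply Qle_refl|intros; apply enc_inj; congruence].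
    + assert (a = t) by (apply enc_inj; congruence). subst a.
      assert (Hb' : (enc b < n)%nat) by lia. split.
      * intros Htb. apply Qlt_le_weak, Hqhi, in_map, Hhi. auto.
      * intros E. exfalso. apply (Hqall (h b)); [apply in_map, Hall; auto|exact E].
    + assert (b = t) by (apply enc_inj; congruence). subst b.
      assert (Ha' : (enc a < n)%nat) by lia. split.
      * intros Hat. apply Qlt_le_weak, Hqlo, in_map, Hlo. auto.
      * intros E. exfalso. apply (Hqall (h a)); [apply in_map, Hall; auto|].
        apply Qeq_sym, E.
    + apply Hh; lia.
  - intros a Ha. destruct (Nat.eq_dec (enc a) n); [lia|reflexivity].
Qed.

Theorem countable_order_embeds_in_Q :
  exists h : T -> Q, (forall a b, le a b -> (h a <= h b)%Q) /\
                     (forall a b, (h a == h b)%Q -> a = b).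
Proof.
  (* [next (n, h)] extends a stage-[n] embedding [h]; iterating it from the
     zero function gives stages that agree on earlier elements. *)
  destruct (choice (fun (nh : nat * (T -> Q)) h' => embeds_below (fst nh) (snd nh) ->
                      embeds_below (S (fst nh)) h' /\
                      forall a, (enc a < fst nh)%nat -> h' a = snd nh a))
    as [next Hnext].
  { intros [n h]. destruct (classic (embeds_below n h)) as [Hh|Hh].
    - destruct (embeds_below_succ n h Hh) as [h' H']. exists h'. auto.
    - exists h. intros; contradiction. }
  set (H := fix H n := match n with O => fun _ : T => 0%Q | S m => next (m, H m) end).
  assert (HV : forall n, embeds_below n (H n)).
  { induction n as [|n IH]; [intros a b Ha; lia|]. apply (Hnext (n, H n) IH). }
  assert (Hstable : forall n m a, (enc a < n)%nat -> (n <= m)%nat -> H m a = H n a).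
  { intros n m a Ha Hnm. induction Hnm as [|m Hnm IH]; [reflexivity|].
    simpl. rewrite (proj2 (Hnext (m, H m) (HV m)) a) by (simpl; lia). exact IH. }
  exists (fun a => H (S (enc a)) a).
  assert (Hcommon : forall a b, let m := S (Nat.max (enc a) (enc b)) in
             H (S (enc a)) a = H m a /\ H (S (enc b)) b = H m b).
  { intros a b m. split; symmetry; apply Hstable; lia. }
  split; intros a b; destruct (Hcommon a b) as [-> ->]; apply HV; lia.
Qed.

End CountableOrderInQ.

Section Pseudoultrametric.

Variables (Z : Type) (d : Z -> Z -> R).
Hypothesis d_pum : pseudoultrametric d.

Lemma pum_le_cases (x y z : Z) : d x y <= d x z \/ d x y <= d z y.
Proof.
  destruct d_pum as [_ [_ [_ Hult]]]. apply Rmax_Rle, Hult.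
Qed.

Lemma pum_isosceles (x y z : Z) :
  d x y = d y z \/ d x z = d y z \/ d x y = d x z.
Proof.
  destruct d_pum as [_ [Hsym _]].
  pose proof (pum_le_cases x y z). pose proof (pum_le_cases y z x).
  pose proof (pum_le_cases x z y). rewrite (Hsym y x) in *.
  rewrite (Hsym z y) in *. lra.
Qed.

Lemma pum_le_of_eq (x y z : Z) : d x y = d y z -> d x z <= d x y.
Proof.
  intros E. destruct (pum_le_cases x z y); lra.
Qed.

Lemma pum_zero_trans (x y z : Z) : d x y = 0 -> d y z = 0 -> d x z = 0.
Proof.
  destruct d_pum as [Hpos _]. intros Exy Eyz.
  pose proof (Hpos x z). pose proof (pum_le_of_eq x y z). lra.
Qed.

Lemma pum_zero_congr (x1 x2 x3 x4 : Z) :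
  d x1 x2 = 0 -> d x3 x4 = 0 -> d x1 x3 = d x2 x4.
Proof.
  destruct d_pum as [Hpos [Hsym _]]. intros E12 E34.
  pose proof (Hpos x1 x3). pose proof (Hpos x2 x4). pose proof (Hpos x2 x3).
  pose proof (pum_le_cases x1 x3 x2). pose proof (pum_le_cases x2 x3 x1).
  pose proof (pum_le_cases x2 x4 x3). pose proof (pum_le_cases x3 x2 x4).
  rewrite (Hsym x2 x1), (Hsym x3 x2), (Hsym x4 x2) in *. lra.
Qed.

End Pseudoultrametric.

Lemma pseudoultrametric_transfer (Z X : Type) (d : Z -> Z -> R) (D : X -> X -> R)
  (g : Z -> X) : surjective g -> (forall z1 z2, D (g z1) (g z2) = d z1 z2) ->
  pseudoultrametric d -> pseudoultrametric D.
Proof.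
  intros g_surj HD [Hpos [Hsym [Hrefl Hult]]].
  repeat split.
  - intros x y. destruct (g_surj x) as [z1 <-], (g_surj y) as [z2 <-].
    rewrite HD. apply Hpos.
  - intros x y. destruct (g_surj x) as [z1 <-], (g_surj y) as [z2 <-].
    rewrite !HD. apply Hsym.
  - intros x. destruct (g_surj x) as [z <-]. rewrite HD. apply Hrefl.
  - intros x y w. destruct (g_surj x) as [z1 <-], (g_surj y) as [z2 <-],
      (g_surj w) as [z3 <-]. rewrite !HD. apply Hult.
Qed.

Lemma rng_eq {X Y : Type} {Phi : X -> X -> Y} (a b : rng Phi) :
  proj1_sig a = proj1_sig b -> a = b.
Proof.
  destruct a as [a Ha], b as [b Hb]. simpl. intros <-. f_equal. apply proof_irrelevance.
Qed.

Section Range.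

Variables (X Y : Type) (Phi : X -> X -> Y).

Lemma in_rng_surj (a : rng Phi) : exists x1 x2, a = in_rng Phi x1 x2.
Proof.
  destruct a as [a [x1 [x2 E]]]. exists x1, x2. apply rng_eq. symmetry. exact E.
Qed.

Lemma in_rng_congr (x1 x2 x3 x4 : X) :
  Phi x1 x2 = Phi x3 x4 -> in_rng Phi x1 x2 = in_rng Phi x3 x4.
Proof. intros E. apply rng_eq, E. Qed.

Lemma comb_similar_pullback (W : Type) (v : rng Phi -> W) :
  injective v -> comb_similar Phi (fun x y => v (in_rng Phi x y)).
Proof.
  intros v_inj.
  unshelve eexists (fun a => exist _ (v a) _).
  { destruct (in_rng_surj a) as [x1 [x2 ->]]. exists x1, x2. reflexivity. }
  exists (fun x => x). repeat split.
  - intros a b E. apply v_inj. exact (f_equal (@proj1_sig _ _) E).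
  - intros [w [x1 [x2 E]]]. exists (in_rng Phi x1 x2). apply rng_eq. exact E.
  - intros x y E. exact E.
  - intros x. exists x. reflexivity.
Qed.

Lemma comb_similar_pum_pullback (Z : Type) (d : Z -> Z -> R) :
  pseudoultrametric d -> comb_similar Phi d ->
  exists v : rng Phi -> R,
    injective v /\ pseudoultrametric (fun x y => v (in_rng Phi x y)).
Proof.
  intros d_pum [f [g [[f_inj _] [[_ g_surj] Hfg]]]].
  exists (fun a => proj1_sig (f a)). split.
  - intros a b E. apply f_inj, rng_eq, E.
  - apply (pseudoultrametric_transfer Z X d _ g g_surj); [|exact d_pum].
    intros z1 z2. symmetry. apply Hfg.
Qed.

End Range.

Definition ultrametric_conditions {X Y : Type} (Phi : X -> X -> Y) : Prop :=
  symmetric_map Phi /\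
  antisymmetric_rel (clos_trans Y (u_rel Phi)) /\
  (exists a0 : Y, (exists x y, Phi x y = a0) /\ coherent Phi a0) /\
  triple_condition Phi.

Section PseudoultrametricPullback.

Variables (X Y : Type) (Phi : X -> X -> Y) (v : rng Phi -> R).
Hypothesis v_inj : injective v.
Local Notation D x y := (v (in_rng Phi x y)).
Hypothesis D_pum : pseudoultrametric (fun x y => D x y).

Lemma pullback_eq_iff (x1 x2 x3 x4 : X) : Phi x1 x2 = Phi x3 x4 <-> D x1 x2 = D x3 x4.
Proof.
  split; intros E.
  - rewrite (in_rng_congr X Y Phi _ _ _ _ E). reflexivity.
  - exact (f_equal (@proj1_sig _ _) (v_inj _ _ E)).
Qed.

Lemma pullback_u_closure_le (a b : Y) : clos_trans Y (u_rel Phi) a b ->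
  exists x1 x2 x3 x4, a = Phi x1 x2 /\ b = Phi x3 x4 /\ D x1 x2 <= D x3 x4.
Proof.
  induction 1 as [a b [x1 [x2 [x3 [-> [-> E]]]]]
                 |a b c _ [x1 [x2 [x3 [x4 [-> [-> Hle1]]]]]]
                  _ [y1 [y2 [y3 [y4 [E [-> Hle2]]]]]]].
  - exists x1, x3, x1, x2. repeat split.
    apply (pum_le_of_eq X _ D_pum). apply pullback_eq_iff, E.
  - exists x1, x2, y3, y4. repeat split.
    apply pullback_eq_iff in E. lra.
Qed.

Lemma pullback_u_antisym : antisymmetric_rel (clos_trans Y (u_rel Phi)).
Proof.
  intros a b Hab Hba.
  destruct (pullback_u_closure_le a b Hab) as [x1 [x2 [x3 [x4 [-> [-> Hle1]]]]]].
  destruct (pullback_u_closure_le _ _ Hba) as [y1 [y2 [y3 [y4 [E1 [E2 Hle2]]]]]].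
  apply pullback_eq_iff in E1, E2. apply pullback_eq_iff. lra.
Qed.

Lemma pullback_coherent (x0 : X) : coherent Phi (Phi x0 x0).
Proof.
  destruct D_pum as [_ [Hsym [Hrefl _]]].
  assert (Hzero : forall x y, Phi x y = Phi x0 x0 <-> D x y = 0).
  { intros x y. rewrite pullback_eq_iff. simpl in Hrefl. rewrite Hrefl. reflexivity. }
  repeat split.
  - intros x. apply Hzero, Hrefl.
  - intros x y z Exy Eyz. apply Hzero. apply Hzero in Exy, Eyz.
    exact (pum_zero_trans X _ D_pum x y z Exy Eyz).
  - intros x y Exy. apply Hzero. apply Hzero in Exy. simpl in Hsym. rewrite Hsym. exact Exy.
  - intros x1 x2 x3 x4 E12 E34. apply pullback_eq_iff.
    apply Hzero in E12, E34. exact (pum_zero_congr X _ D_pum x1 x2 x3 x4 E12 E34).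
Qed.

Lemma pullback_triple : triple_condition Phi.
Proof.
  destruct D_pum as [_ [Hsym _]]. simpl in Hsym.
  intros x1 x2 x3. rewrite !pullback_eq_iff, (Hsym x3 x2), (Hsym x2 x1).
  destruct (pum_isosceles X _ D_pum x1 x2 x3) as [E|[E|E]]; auto.
Qed.

Lemma pullback_ultrametric_conditions : inhabited X -> ultrametric_conditions Phi.
Proof.
  intros [x0]. destruct D_pum as [_ [Hsym _]]. repeat split.
  - intros x y. apply pullback_eq_iff, Hsym.
  - exact pullback_u_antisym.
  - exists (Phi x0 x0). split; [eauto|apply pullback_coherent].
  - exact pullback_triple.
Qed.

End PseudoultrametricPullback.

Definition similar_to_rational_pum {X Y : Type} (Phi : X -> X -> Y) : Prop :=
  exists d : X -> X -> R,
    pseudoultrametric d /\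
    (forall x y, exists q : Q, (0 <= q)%Q /\ d x y = Q2R q) /\
    comb_similar Phi d.

Section RationalRealization.

Variables (X Y : Type) (Phi : X -> X -> Y) (x0 : X).
Hypothesis Phi_sym : symmetric_map Phi.
Hypothesis Phi_diag : forall x, Phi x x = Phi x0 x0.

Lemma rational_pum_of_ranking (h : rng Phi -> Q) :
  (forall a b, (h a == h b)%Q -> a = b) ->
  (forall a, (h (in_rng Phi x0 x0) <= h a)%Q) ->
  (forall x y z, (h (in_rng Phi x y) <= h (in_rng Phi x z))%Q \/
                 (h (in_rng Phi x y) <= h (in_rng Phi z y))%Q) ->
  similar_to_rational_pum Phi.
Proof.
  intros h_inj h_min h_ult.
  set (c := h (in_rng Phi x0 x0)).
  exists (fun x y => Q2R (h (in_rng Phi x y) - c)). split; [repeat split|split].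
  - intros x y. rewrite <- RMicromega.Q2R_0. apply Qle_Rle.
    specialize (h_min (in_rng Phi x y)). unfold c. Lqa.lra.
  - intros x y. rewrite (in_rng_congr X Y Phi x y y x (Phi_sym x y)). reflexivity.
  - intros z. rewrite (in_rng_congr X Y Phi z z x0 x0 (Phi_diag z)).
    rewrite <- RMicromega.Q2R_0. apply Qeq_eqR. unfold c. Lqa.lra.
  - intros x y z. apply Rmax_Rle.
    destruct (h_ult x y z); [left|right]; apply Qle_Rle; Lqa.lra.
  - intros x y. exists (h (in_rng Phi x y) - c)%Q. split; [|reflexivity].
    specialize (h_min (in_rng Phi x y)). unfold c. Lqa.lra.
  - apply (comb_similar_pullback X Y Phi R (fun a => Q2R (h a - c))).
    intros a b E. apply h_inj. apply eqR_Qeq in E. Lqa.lra.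
Qed.

Hypothesis u_antisym : antisymmetric_rel (clos_trans Y (u_rel Phi)).
Hypothesis Phi_triple : triple_condition Phi.

Definition u_order : relation (rng Phi) :=
  clos_refl_trans _ (fun a b => u_rel Phi (proj1_sig a) (proj1_sig b)).

Lemma u_order_clos_trans (a b : rng Phi) : u_order a b ->
  a = b \/ clos_trans Y (u_rel Phi) (proj1_sig a) (proj1_sig b).
Proof.
  induction 1 as [a b H|a|a b c _ [->|H1] _ [->|H2]]; auto.
  - right. apply t_step, H.
  - right. apply t_trans with (proj1_sig b); auto.
Qed.

Lemma u_order_antisym (a b : rng Phi) : u_order a b -> u_order b a -> a = b.
Proof.
  intros Hab Hba.
  destruct (u_order_clos_trans a b Hab) as [|H1]; [assumption|].
  destruct (u_order_clos_trans b a Hba) as [<-|H2]; [reflexivity|].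
  apply rng_eq, u_antisym; assumption.
Qed.

Lemma u_order_diag_least (a : rng Phi) : u_order (in_rng Phi x0 x0) a.
Proof.
  destruct (in_rng_surj X Y Phi a) as [x [y ->]]. apply rt_step. simpl.
  exists x, y, x. rewrite (Phi_diag x). repeat split. apply Phi_sym.
Qed.

Lemma u_order_ultra (x y z : X) :
  u_order (in_rng Phi x y) (in_rng Phi x z) \/ u_order (in_rng Phi x y) (in_rng Phi z y).
Proof.
  assert (Phi x y = Phi x z \/ Phi x y = Phi z y \/ u_rel Phi (Phi x y) (Phi x z))
    as [E|[E|E]].
  { destruct (Phi_triple x y z) as [E|[E|[E|[E|[E|E]]]]].
    - right; left. rewrite E. apply Phi_sym.
    - right; right. exists x, z, y. auto.
    - left. rewrite Phi_sym. exact E.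
    - right; right. exists x, z, y. repeat split. rewrite (Phi_sym x z), <- E. apply Phi_sym.
    - left. rewrite <- E. apply Phi_sym.
    - right; left. rewrite E. apply Phi_sym. }
  - left. rewrite (in_rng_congr X Y Phi _ _ _ _ E). apply rt_refl.
  - right. rewrite (in_rng_congr X Y Phi _ _ _ _ E). apply rt_refl.
  - left. apply rt_step. exact E.
Qed.

Lemma rational_pum_of_u_order : countable_range Phi -> similar_to_rational_pum Phi.
Proof.
  intros [enc enc_inj].
  destruct (countable_order_embeds_in_Q (rng Phi) enc u_order enc_inj
              (rt_trans _ _) u_order_antisym) as [h [h_mono h_inj]].
  apply (rational_pum_of_ranking h h_inj).
  - intros a. apply h_mono, u_order_diag_least.
  - intros x y z. destruct (u_order_ultra x y z); [left|right]; apply h_mono; auto.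
Qed.

End RationalRealization.

Lemma ultrametric_conditions_rational_pum (X Y : Type) (Phi : X -> X -> Y) :
  inhabited X -> countable_range Phi -> ultrametric_conditions Phi ->
  similar_to_rational_pum Phi.
Proof.
  intros [x0] hc [Phi_sym [u_antisym [[a0 [_ [[Hrefl _ _] _]]] Phi_triple]]].
  apply (rational_pum_of_u_order X Y Phi x0); auto.
  intros x. rewrite (Hrefl x). symmetry. apply Hrefl.
Qed.

Theorem theorem3p10 (X Y : Type) (Phi : X -> X -> Y)
  (hX : inhabited X) (hc : countable_range Phi) :
  ((exists d : X -> X -> R,
       pseudoultrametric d /\
       (forall x y, exists q : Q, (0 <= q)%Q /\ d x y = Q2R q) /\
       comb_similar Phi d)
   <->
   (exists (Z : Type) (d : Z -> Z -> R),
       pseudoultrametric d /\ comb_similar Phi d))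
  /\
  ((exists (Z : Type) (d : Z -> Z -> R),
       pseudoultrametric d /\ comb_similar Phi d)
   <->
   (symmetric_map Phi /\
    antisymmetric_rel (clos_trans Y (u_rel Phi)) /\
    (exists a0 : Y, (exists x y, Phi x y = a0) /\ coherent Phi a0) /\
    triple_condition Phi)).
Proof.
  assert (i_ii : similar_to_rational_pum Phi ->
                 exists (Z : Type) (d : Z -> Z -> R), pseudoultrametric d /\ comb_similar Phi d).
  { intros [d [d_pum [_ d_sim]]]. exists X, d. auto. }
  assert (ii_iii : forall (Z : Type) (d : Z -> Z -> R), pseudoultrametric d ->
                   comb_similar Phi d -> ultrametric_conditions Phi).
  { intros Z d d_pum d_sim.
    destruct (comb_similar_pum_pullback X Y Phi Z d d_pum d_sim) as [v [v_inj v_pum]].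
    exact (pullback_ultrametric_conditions X Y Phi v v_inj v_pum hX). }
  pose proof (ultrametric_conditions_rational_pum X Y Phi hX hc) as iii_i.
  split; split.
  - exact i_ii.
  - intros [Z [d [d_pum d_sim]]]. exact (iii_i (ii_iii Z d d_pum d_sim)).
  - intros [Z [d [d_pum d_sim]]]. exact (ii_iii Z d d_pum d_sim).
  - intros H. exact (i_ii (iii_i H)).
Qed.
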